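(* Let $A$ be a locally-complex Cayley--Dickson algebra and let $f(x)=x^n+a_{n-1}x^{n-1}+\dots+a_1x+a_0\in A[x]$ be monic with $n\ge 1$. Then every $r\in\mathrm{sn}(f)$ satisfies $|r|<R_1(f)=\sqrt{1+|a_{n-1}|^2+\dots+|a_1|^2+|a_0|^2}$, $|r|<R_2(f)=1+\max_{0\le k\le n-1}|a_k|$, and $|r|\le R_3(f)=\max\{1,\ |a_{n-1}|+\dots+|a_1|+|a_0|\}$.
   Context: Real Cayley--Dickson algebras: $A_0=\mathbb{R}$ with identity involution, $A_{k+1}=A_k\{\gamma_k\}=A_k\times A_k$ with product $(a,b)(c,d)=(ac+\gamma_k\bar d b,\ da+b\bar c)$ and involution $\overline{(a,b)}=(\bar a,-b)$. A real unital algebra is locally-complex if every non-real element generates a subalgebra isomorphic to $\mathbb{C}$ (for Cayley--Dickson algebras: all $\gamma_k=-1$ up to isomorphism). Trace $\mathrm{tr}(\lambda)=\lambda+\bar\lambda$, norm $\mathrm{n}(\lambda)=\bar\lambda\lambda$, $|\lambda|=\sqrt{\mathrm{n}(\lambda)}$ (the Euclidean norm); $\langle\cdot,\cdot\rangle$ the associated inner product. For $I$ with trace $0$ and norm $1$, $\mathbb{C}_I=\mathbb{R}+\mathbb{R}I\cong\mathbb{C}$ and $\pi_I$ the orthogonal projection onto it. $A[x]=A\otimes_{\mathbb{R}}\mathbb{R}[x]$ with central $x$; for $f(x)=\sum_k a_kx^k$, $f_I(x)=\sum_k\pi_I(a_k)x^k$. If $f_I$ is non-constant, $K_{\mathbb{C}_I}(f_I)$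 is the convex hull in $\mathbb{C}_I$ of the roots of $f_I$ in $\mathbb{C}_I$; otherwise $K_{\mathbb{C}_I}(f_I)=\mathbb{C}_I$. The Gauss--Lucas snail is $\mathrm{sn}(f)=\bigcup_I K_{\mathbb{C}_I}(f_I)$ over all $I$ with $\mathrm{tr}(I)=0$, $\mathrm{n}(I)=1$. *)

From mathcomp Require Import all_boot all_order all_algebra.
From mathcomp Require Import reals.
Set Implicit Arguments. Unset Strict Implicit. Unset Printing Implicit Defensive.
Import Order.TTheory GRing.Theory Num.Theory.
Local Open Scope ring_scope.

(* The locally-complex Cayley--Dickson algebra A_k over a real field R:
   A_0 = R, A_(k+1) = A_k x A_k with gamma_k = -1:
   (a,b)(c,d) = (ac - conj(d) b, d a + b conj(c)), conj (a,b) = (conj a, -b). *)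
Fixpoint cd (R : realType) (k : nat) : Type :=
  match k with 0 => (R : Type) | k'.+1 => (cd R k' * cd R k')%type end.

Fixpoint czero (R : realType) (k : nat) : cd R k :=
  match k as k0 return cd R k0 with 0 => (0 : R) | k'.+1 => (czero R k', czero R k') end.

Fixpoint cscale (R : realType) (k : nat) (t : R) : cd R k -> cd R k :=
  match k as k0 return cd R k0 -> cd R k0 with
  | 0 => fun x : R => t * x
  | k'.+1 => fun x => (cscale t x.1, cscale t x.2) end.

Fixpoint creal (R : realType) (k : nat) (t : R) : cd R k :=
  match k as k0 return cd R k0 with 0 => t | k'.+1 => (creal k' t, czero R k') end.

Definition cone (R : realType) (k : nat) : cd R k := creal k 1.

Fixpoint cadd (R : realType) (k : nat) : cd R k -> cd R k -> cd R k :=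
  match k as k0 return cd R k0 -> cd R k0 -> cd R k0 with
  | 0 => fun x y : R => x + y
  | k'.+1 => fun x y => (cadd x.1 y.1, cadd x.2 y.2) end.

Fixpoint copp (R : realType) (k : nat) : cd R k -> cd R k :=
  match k as k0 return cd R k0 -> cd R k0 with
  | 0 => fun x : R => - x
  | k'.+1 => fun x => (copp x.1, copp x.2) end.

Fixpoint cconj (R : realType) (k : nat) : cd R k -> cd R k :=
  match k as k0 return cd R k0 -> cd R k0 with
  | 0 => fun x : R => x
  | k'.+1 => fun x => (cconj x.1, copp x.2) end.

Fixpoint cmul (R : realType) (k : nat) : cd R k -> cd R k -> cd R k :=
  match k as k0 return cd R k0 -> cd R k0 -> cd R k0 with
  | 0 => fun x y : R => x * y
  | k'.+1 => fun x y =>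
      (cadd (cmul x.1 y.1) (copp (cmul (cconj y.2) x.2)),
       cadd (cmul y.2 x.1) (cmul x.2 (cconj y.1))) end.

(* the real coordinate ("real part") of an element; used to read off the
   real numbers n(lambda) = conj(lambda) lambda, which lie in R = R*1 *)
Fixpoint cre (R : realType) (k : nat) : cd R k -> R :=
  match k as k0 return cd R k0 -> R with
  | 0 => fun x : R => x
  | k'.+1 => fun x => cre x.1 end.

Definition ctr (R : realType) (k : nat) (x : cd R k) : cd R k := cadd x (cconj x).
Definition cn (R : realType) (k : nat) (x : cd R k) : cd R k := cmul (cconj x) x.
Definition cabs (R : realType) (k : nat) (x : cd R k) : R := Num.sqrt (cre (cn x)).
Definition cinner (R : realType) (k : nat) (x y : cd R k) : R :=
  (cre (cn (cadd x y)) - cre (cn x) - cre (cn y)) / 2.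

Definition imag_unit (R : realType) (k : nat) (I : cd R k) : Prop :=
  ctr I = czero R k /\ cn I = cone R k.

Definition inCI (R : realType) (k : nat) (I z : cd R k) : Prop :=
  exists x y : R, z = cadd (creal k x) (cscale y I).

(* orthogonal projection onto C_I (1, I is an orthonormal basis of C_I) *)
Definition piI (R : realType) (k : nat) (I a : cd R k) : cd R k :=
  cadd (cscale (cinner a (cone R k)) (cone R k)) (cscale (cinner a I) I).

Fixpoint cpow (R : realType) (k : nat) (z : cd R k) (j : nat) : cd R k :=
  if j is j'.+1 then cmul z (cpow z j') else cone R k.

Definition csum (R : realType) (k : nat) (s : seq (cd R k)) : cd R k :=
  foldr (@cadd R k) (czero R k) s.

(* polynomials in A[x] are coefficient lists [:: a_0; a_1; ...; a_d];
   evaluation at z (x central): sum_j a_j z^j *)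
Definition ceval (R : realType) (k : nat) (p : seq (cd R k)) (z : cd R k) : cd R k :=
  csum [seq cmul (nth (czero R k) p j) (cpow z j) | j <- iota 0 (size p)].

Definition polyI (R : realType) (k : nat) (I : cd R k) (p : seq (cd R k)) :=
  [seq piI I a | a <- p].

Definition nonconst (R : realType) (k : nat) (p : seq (cd R k)) : Prop :=
  exists2 j, (0 < j)%N & nth (czero R k) p j <> czero R k.

(* K_{C_I}(f_I): convex hull in C_I of the roots of f_I in C_I,
   or all of C_I if f_I is constant *)
Definition KCI (R : realType) (k : nat) (I : cd R k) (p : seq (cd R k)) (r : cd R k) : Prop :=
  let q := polyI I p in
  (nonconst q ->
    exists m (z : 'I_m -> cd R k) (t : 'I_m -> R),
      [/\ forall i, inCI I (z i) /\ ceval q (z i) = czero R k,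
          forall i, 0 <= t i,
          \sum_(i < m) t i = 1 &
          r = csum [seq cscale (t i) (z i) | i <- enum 'I_m]])
  /\ (~ nonconst q -> inCI I r).

Definition snail (R : realType) (k : nat) (p : seq (cd R k)) (r : cd R k) : Prop :=
  exists I, imag_unit I /\ KCI I p r.

(* For an imaginary unit I, x + iy |-> x + yI is a norm-preserving ring
   isomorphism from C onto C_I, and pi_I is the orthogonal projection onto C_I,
   so |pi_I(a)| <= |a|.  Thus f_I is, inside C_I, the monic complex polynomial
   whose coefficients are the coordinates of the pi_I(a_k), and every root z of
   f_I in C_I satisfies |z|^n <= sum_k |a_k| |z|^k.  Each of R_1, R_2, R_3
   bounds every nonnegative rho with rho^n <= sum_k |a_k| rho^k: for R_1 by
   Cauchy-Schwarz against the geometric sum of the rho^(2k), for R_2 by the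
   geometric sum of the rho^k, for R_3 by comparing rho^k with rho^(n-1).
   Finally, the norm of a convex combination of points of C_I is at most the
   norm of one of them. *)

From mathcomp Require Import all_boot all_order all_algebra reals.
From mathcomp.real_closed Require Import complex.
From mathcomp.algebra_tactics Require Import ring lra.
Import Order.TTheory GRing.Theory Num.Theory.
Local Open Scope ring_scope.
Set Implicit Arguments. Unset Strict Implicit. Unset Printing Implicit Defensive.

Section CayleyDickson.
Variable R : realType.
Local Notation cd := (cd R).
Local Notation c0 := (czero R _).

Lemma caddA k (x y z : cd k) : cadd x (cadd y z) = cadd (cadd x y) z.
Proof. by elim: k x y z => [|k IH] /= x y z; rewrite ?addrA ?IH. Qed.

Lemma caddC k (x y : cd k) : cadd x y = cadd y x.
Proof. by elim: k x y => [|k IH] /= x y; rewrite 1?addrC // IH (IH x.2). Qed.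

Lemma cadd0l k (x : cd k) : cadd c0 x = x.
Proof. by elim: k x => [|k IH] /= x; rewrite ?add0r // !IH; case: x. Qed.

Lemma cadd0r k (x : cd k) : cadd x c0 = x.
Proof. by rewrite caddC cadd0l. Qed.

Lemma caddN k (x : cd k) : cadd x (copp x) = c0.
Proof. by elim: k x => [|k IH] /= x; rewrite ?subrr ?IH. Qed.

Lemma caddACA k (x y z t : cd k) :
  cadd (cadd x y) (cadd z t) = cadd (cadd x z) (cadd y t).
Proof. by rewrite -!caddA (caddA y) (caddC y z) -caddA. Qed.

Lemma cadd_eq0 k (x y : cd k) : cadd x y = c0 -> y = copp x.
Proof.
by move=> xy0; rewrite -[y]cadd0l -(caddN x) -caddA (caddC _ y) caddA xy0 cadd0l.
Qed.

Lemma cscaleA k (s t : R) (x : cd k) : cscale s (cscale t x) = cscale (s * t) x.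
Proof. by elim: k x => [|k IH] /= x; rewrite ?mulrA ?IH. Qed.

Lemma cscale1 k (x : cd k) : cscale 1 x = x.
Proof. by elim: k x => [|k IH] /= x; rewrite ?mul1r // !IH; case: x. Qed.

Lemma cscale0 k (x : cd k) : cscale 0 x = c0.
Proof. by elim: k x => [|k IH] /= x; rewrite ?mul0r ?IH. Qed.

Lemma cscaler0 k (t : R) : cscale t (czero R k) = czero R k.
Proof. by elim: k => [|k IH] /=; rewrite ?mulr0 ?IH. Qed.

Lemma cscaleDl k (s t : R) (x : cd k) :
  cscale (s + t) x = cadd (cscale s x) (cscale t x).
Proof. by elim: k x => [|k IH] /= x; rewrite ?mulrDl ?IH. Qed.

Lemma cscaleDr k (t : R) (x y : cd k) :
  cscale t (cadd x y) = cadd (cscale t x) (cscale t y).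
Proof. by elim: k x y => [|k IH] /= x y; rewrite ?mulrDr ?IH. Qed.

Lemma cscale_real k (s t : R) : cscale s (creal k t) = creal k (s * t).
Proof. by elim: k => [|k IH] //=; rewrite IH cscaler0. Qed.

Lemma coppE k (x : cd k) : copp x = cscale (-1) x.
Proof. by elim: k x => [|k IH] /= x; rewrite ?mulN1r ?IH. Qed.

Lemma coppK k (x : cd k) : copp (copp x) = x.
Proof. by rewrite !coppE cscaleA mulN1r opprK cscale1. Qed.

Lemma cconjD k (x y : cd k) : cconj (cadd x y) = cadd (cconj x) (cconj y).
Proof. by elim: k x y => [|k IH] //= x y; rewrite IH !coppE cscaleDr. Qed.

Lemma cconjZ k (t : R) (x : cd k) : cconj (cscale t x) = cscale t (cconj x).
Proof. by elim: k x => [|k IH] //= x; rewrite IH !coppE !cscaleA mulrC. Qed.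

Lemma cconj0 k : cconj (czero R k) = czero R k.
Proof. by rewrite -(cscaler0 k 0) cconjZ !cscale0. Qed.

Lemma cconj_real k (t : R) : cconj (creal k t) = creal k t.
Proof. by elim: k => [|k IH] //=; rewrite IH coppE cscaler0. Qed.

Lemma cmulD k :
  (forall x y z : cd k, cmul (cadd x y) z = cadd (cmul x z) (cmul y z)) /\
  (forall x y z : cd k, cmul x (cadd y z) = cadd (cmul x y) (cmul x z)).
Proof.
elim: k => [|k [IHl IHr]]; first by split=> x y z /=; rewrite ?mulrDl ?mulrDr.
split=> x y z /=; rewrite ?cconjD IHl IHr IHr IHl coppE cscaleDr -!coppE;
  by congr pair; rewrite caddACA.
Qed.

Lemma cmulDl k (x y z : cd k) : cmul (cadd x y) z = cadd (cmul x z) (cmul y z).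
Proof. exact: (cmulD k).1. Qed.

Lemma cmulDr k (x y z : cd k) : cmul x (cadd y z) = cadd (cmul x y) (cmul x z).
Proof. exact: (cmulD k).2. Qed.

Lemma cmulZ k (t : R) :
  (forall x y : cd k, cmul (cscale t x) y = cscale t (cmul x y)) /\
  (forall x y : cd k, cmul x (cscale t y) = cscale t (cmul x y)).
Proof.
elim: k => [|k [IHl IHr]]; first by split=> x y /=; ring.
split=> x y /=; rewrite ?cconjZ IHl IHr IHr IHl !cscaleDr !coppE !cscaleA mulrC //.
Qed.

Lemma cmulZl k (t : R) (x y : cd k) : cmul (cscale t x) y = cscale t (cmul x y).
Proof. exact: (cmulZ k t).1. Qed.

Lemma cmulZr k (t : R) (x y : cd k) : cmul x (cscale t y) = cscale t (cmul x y).
Proof. exact: (cmulZ k t).2. Qed.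

Lemma cmulNl k (x y : cd k) : cmul (copp x) y = copp (cmul x y).
Proof. by rewrite !coppE cmulZl. Qed.

Lemma cmul0l k (x : cd k) : cmul c0 x = c0.
Proof. by rewrite -(cscaler0 k 0) cmulZl !cscale0. Qed.

Lemma cmul0r k (x : cd k) : cmul x c0 = c0.
Proof. by rewrite -(cscaler0 k 0) cmulZr !cscale0. Qed.

Lemma cmul_real k (t : R) :
  (forall x : cd k, cmul (creal k t) x = cscale t x) /\
  (forall x : cd k, cmul x (creal k t) = cscale t x).
Proof.
elim: k => [|k [IHl IHr]]; first by split=> x //=; rewrite mulrC.
split=> -[x1 x2] /=; rewrite ?cconj0 ?cconj_real ?IHl ?IHr ?cmul0l ?cmul0r;
  by rewrite coppE cscaler0 cadd0r ?cadd0l ?cadd0r.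
Qed.

Lemma cmul1l k (x : cd k) : cmul (cone R k) x = x.
Proof. by rewrite (cmul_real k 1).1 cscale1. Qed.

Lemma cmul1r k (x : cd k) : cmul x (cone R k) = x.
Proof. by rewrite (cmul_real k 1).2 cscale1. Qed.

Lemma creD k (x y : cd k) : cre (cadd x y) = cre x + cre y.
Proof. by elim: k x y => [|k IH] //= x y; rewrite IH. Qed.

Lemma creZ k (t : R) (x : cd k) : cre (cscale t x) = t * cre x.
Proof. by elim: k x => [|k IH] //= x; rewrite IH. Qed.

Lemma cre_conj k (x : cd k) : cre (cconj x) = cre x.
Proof. by elim: k x => [|k IH] //= x; rewrite IH. Qed.

Lemma cre_real k (t : R) : cre (creal k t) = t.
Proof. by elim: k => [|k IH] //=; rewrite IH. Qed.

Lemma cre0 k : cre (czero R k) = 0.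
Proof. by elim: k => [|k IH] //=; rewrite IH. Qed.

Fixpoint cdot k : cd k -> cd k -> R :=
  match k as k0 return cd k0 -> cd k0 -> R with
  | 0 => fun x y : R => x * y
  | k'.+1 => fun x y => cdot x.1 y.1 + cdot x.2 y.2 end.

Lemma cdotC k (x y : cd k) : cdot x y = cdot y x.
Proof. by elim: k x y => [|k IH] /= x y; rewrite 1?mulrC // IH (IH x.2). Qed.

Lemma cdotDl k (x y z : cd k) : cdot (cadd x y) z = cdot x z + cdot y z.
Proof. by elim: k x y z => [|k IH] /= x y z; rewrite ?mulrDl // !IH addrACA. Qed.

Lemma cdotDr k (x y z : cd k) : cdot x (cadd y z) = cdot x y + cdot x z.
Proof. by rewrite !(cdotC x) cdotDl. Qed.

Lemma cdotZl k (t : R) (x y : cd k) : cdot (cscale t x) y = t * cdot x y.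
Proof. by elim: k x y => [|k IH] /= x y; rewrite ?mulrA // !IH mulrDr. Qed.

Lemma cdotZr k (t : R) (x y : cd k) : cdot x (cscale t y) = t * cdot x y.
Proof. by rewrite !(cdotC x) cdotZl. Qed.

Lemma cdot_ge0 k (x : cd k) : 0 <= cdot x x.
Proof. by elim: k x => [|k IH] /= x; rewrite ?addr_ge0 // -expr2 sqr_ge0. Qed.

Lemma cdot1l k (x : cd k) : cdot (cone R k) x = cre x.
Proof.
rewrite /cone; elim: k x => [|k IH] /= x; first exact: mul1r.
by rewrite IH -(cscaler0 k 0) cdotZl mul0r addr0.
Qed.

Lemma cre_cn k (x : cd k) : cre (cn x) = cdot x x.
Proof.
rewrite /cn; elim: k x => [|k IH] //= x.
by rewrite creD coppE creZ coppE cmulZr creZ !IH; ring.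
Qed.

Lemma cinnerE k (x y : cd k) : cinner x y = cdot x y.
Proof. by rewrite /cinner !cre_cn cdotDl !cdotDr (cdotC y x); field. Qed.

Lemma cabsE k (x : cd k) : cabs x = Num.sqrt (cdot x x).
Proof. by rewrite /cabs cre_cn. Qed.

End CayleyDickson.

Section ComplexSlice.
Variables (R : realType) (k : nat) (I : cd R k).
Hypothesis I_unit : imag_unit I.
Local Notation e := (cone R k).
Local Notation c0 := (czero R k).
Local Notation normc := Normc.normc.

Definition embI (w : R[i]) : cd R k :=
  cadd (cscale (complex.Re w) e) (cscale (complex.Im w) I).

Definition coordI (a : cd R k) : R[i] := (cinner a e +i* cinner a I)%C.

Lemma piIE (a : cd R k) : piI I a = embI (coordI a).
Proof. by []. Qed.

Lemma cconjI : cconj I = copp I.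
Proof. by case: I_unit => /cadd_eq0. Qed.

Lemma cmulII : cmul I I = copp e.
Proof. by case: I_unit => _; rewrite /cn cconjI cmulNl => <-; rewrite coppK. Qed.

Lemma cdot11 : cdot e e = 1.
Proof. by rewrite cdot1l cre_real. Qed.

Lemma cdot1I : cdot e I = 0.
Proof.
rewrite cdot1l; case: I_unit => /(congr1 (@cre R k)).
by rewrite creD cre_conj cre0 -mulr2n => /eqP; rewrite mulrn_eq0 => /eqP.
Qed.

Lemma cdotII : cdot I I = 1.
Proof. by rewrite -cre_cn; case: I_unit => _ ->; rewrite cre_real. Qed.

Lemma embID u v : embI (u + v) = cadd (embI u) (embI v).
Proof. by case: u v => a b [c d]; rewrite /embI /= caddACA !cscaleDl. Qed.

Lemma embIZ (t : R) w : embI ((t%:C)%C * w) = cscale t (embI w).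
Proof. by case: w => a b; rewrite /embI /= cscaleDr !cscaleA !mul0r subr0 addr0. Qed.

Lemma embI0 : embI 0 = c0.
Proof. by rewrite /embI /= !cscale0 cadd0l. Qed.

Lemma embI1 : embI 1 = e.
Proof. by rewrite /embI /= cscale0 cscale1 cadd0r. Qed.

Lemma cmulI_embI w : cmul I (embI w) = embI ('i%C * w).
Proof.
case: w => c d; rewrite /embI /= cmulDr !cmulZr cmul1r cmulII caddC.
by rewrite coppE cscaleA mulrN1 !mul0r !mul1r sub0r add0r.
Qed.

Lemma embIM u v : embI (u * v) = cmul (embI u) (embI v).
Proof.
have -> : u * v = (complex.Re u)%:C%C * v + (complex.Im u)%:C%C * ('i%C * v).
  case: u v => a b [c d]; apply/eqP; rewrite eq_complex /=.
  by apply/andP; split; apply/eqP; ring.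
by rewrite embID !embIZ -cmulI_embI {3}/embI cmulDl !cmulZl cmul1l.
Qed.

Lemma cdot_embIl w (x : cd R k) :
  cdot (embI w) x = complex.Re w * cdot e x + complex.Im w * cdot I x.
Proof. by rewrite cdotDl !cdotZl. Qed.

Lemma cdot_embI u v :
  cdot (embI u) (embI v) = complex.Re u * complex.Re v + complex.Im u * complex.Im v.
Proof.
rewrite !cdot_embIl !(cdotC _ (embI v)) !cdot_embIl cdot11 cdotII (cdotC I) cdot1I.
by ring.
Qed.

Lemma cabs_embI w : cabs (embI w) = normc w.
Proof. by rewrite cabsE cdot_embI; case: w => a b /=; rewrite !expr2. Qed.

Lemma embI_eq0 w : embI w = c0 -> w = 0.
Proof.
move=> w0; apply: Normc.eq0_normc.
by rewrite -cabs_embI w0 cabsE -(cscaler0 k 0) cdotZl mul0r sqrtr0.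
Qed.

Lemma coordI_embI w : coordI (embI w) = w.
Proof.
rewrite /coordI !cinnerE !cdot_embIl cdot11 cdotII (cdotC I) cdot1I.
by case: w => a b /=; congr (_ +i* _)%C; ring.
Qed.

Lemma inCI_embI (z : cd R k) : inCI I z -> z = embI (coordI z).
Proof.
case=> x [y ->]; have -> : cadd (creal k x) (cscale y I) = embI (x +i* y)%C.
  by rewrite /embI /= /cone cscale_real mulr1.
by rewrite coordI_embI.
Qed.

Lemma coordI1 : coordI e = 1.
Proof. by rewrite -embI1 coordI_embI. Qed.

Lemma normc_coordI_le (a : cd R k) : normc (coordI a) <= cabs a.
Proof.
rewrite cabsE /coordI /= !cinnerE ler_sqrt ?cdot_ge0 //.
set u := embI (coordI a).
have au : cdot a u = cdot a e ^+ 2 + cdot a I ^+ 2.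
  by rewrite cdotC cdot_embIl /coordI /= !cinnerE (cdotC e) (cdotC I) !expr2.
have uu : cdot u u = cdot a e ^+ 2 + cdot a I ^+ 2.
  by rewrite cdot_embI /coordI /= !cinnerE !expr2.
(* Bessel: |a|^2 - |pi_I(a)|^2 = |a - pi_I(a)|^2 >= 0. *)
have := cdot_ge0 (cadd a (cscale (-1) u)).
rewrite cdotDl !cdotDr !cdotZl !cdotZr (cdotC u a) au uu; lra.
Qed.

End ComplexSlice.

Section ComplexNorm.
Variable R : rcfType.
Local Notation normc := (@Normc.normc R).

Lemma normc_ge0 (w : R[i]) : 0 <= normc w.
Proof. by case: w => a b; exact: sqrtr_ge0. Qed.

Lemma normcX (w : R[i]) j : normc (w ^+ j) = normc w ^+ j.
Proof. by elim: j => [|j IH]; rewrite ?Normc.normc1 // !exprS Normc.normcM IH. Qed.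

Lemma normc_real (t : R) : 0 <= t -> normc (t%:C)%C = t.
Proof. by move=> t0; rewrite /= expr0n addr0 sqrtr_sqr ger0_norm. Qed.

(* [Rcomplex R] is [R[i]] equipped with [normc] as its norm. *)
Lemma normc_sum (T : Type) (s : seq T) (F : T -> R[i]) :
  normc (\sum_(i <- s) F i) <= \sum_(i <- s) (normc (F i) : R).
Proof. exact: (@ler_norm_sum _ (Rcomplex R)). Qed.

Lemma normc_root_monic n (c : 'I_n -> R[i]) (w : R[i]) :
  w ^+ n + \sum_(j < n) c j * w ^+ j = 0 ->
  normc w ^+ n <= \sum_(j < n) normc (c j) * normc w ^+ j.
Proof.
move/eqP; rewrite addr_eq0 => /eqP wn.
rewrite -normcX wn normcN; apply: le_trans (normc_sum _ _) _.
by apply: ler_sum => j _; rewrite Normc.normcM normcX.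
Qed.

End ComplexNorm.

Section RealInequalities.
Variable R : realFieldType.

Lemma cauchy_schwarz n (x y : 'I_n -> R) :
  (\sum_(j < n) x j * y j) ^+ 2 <= (\sum_(j < n) x j ^+ 2) * (\sum_(j < n) y j ^+ 2).
Proof.
set X := \sum_(j < n) x j ^+ 2; set Y := \sum_(j < n) y j ^+ 2.
have -> : (\sum_(j < n) x j * y j) ^+ 2 = \sum_(i < n) \sum_(j < n) x i * y i * (x j * y j).
  by rewrite expr2 mulr_suml; apply: eq_bigr => i _; rewrite mulr_sumr.
have XY : X * Y = \sum_(i < n) \sum_(j < n) x i ^+ 2 * y j ^+ 2.
  by rewrite mulr_suml; apply: eq_bigr => i _; rewrite mulr_sumr.
have YX : X * Y = \sum_(i < n) \sum_(j < n) x j ^+ 2 * y i ^+ 2.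
  rewrite mulrC mulr_suml; apply: eq_bigr => i _; rewrite mulr_sumr.
  by apply: eq_bigr => j _; rewrite mulrC.
have amgm i j : 2 * (x i * y i * (x j * y j)) <= x i ^+ 2 * y j ^+ 2 + x j ^+ 2 * y i ^+ 2.
  by rewrite -subr_ge0 (_ : _ - _ = (x i * y j - x j * y i) ^+ 2) ?sqr_ge0 //; ring.
suff : 2 * \sum_(i < n) \sum_(j < n) x i * y i * (x j * y j) <= X * Y + X * Y by lra.
rewrite {1}XY YX -big_split mulr_sumr; apply: ler_sum => i _.
by rewrite -big_split mulr_sumr; apply: ler_sum => j _.
Qed.

Lemma convex_comb_le_max m (t c : 'I_m -> R) :
  (forall i, 0 <= t i) -> \sum_(i < m) t i = 1 ->
  exists i, \sum_(j < m) t j * c j <= c i.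
Proof.
case: m t c => [|m] t c t0 t1.
  by move: t1; rewrite big_ord0 => /eqP; rewrite eq_sym oner_eq0.
case: (@arg_maxP _ _ 'I_m.+1 ord0 xpredT c) => // i _ i_max.
exists i; rewrite -[leRHS]mul1r -t1 mulr_suml; apply: ler_sum => j _.
by apply: ler_wpM2l => //; exact: i_max.
Qed.

End RealInequalities.

Section RootModulusBounds.
Variables (R : rcfType) (n : nat) (A : 'I_n -> R) (rho : R).
Hypotheses (A_ge0 : forall j, 0 <= A j) (rho_ge0 : 0 <= rho).
Hypothesis rho_pow_le : rho ^+ n <= \sum_(j < n) A j * rho ^+ j.

Lemma rho_lt_sqrt_1_add_sumsq : rho < Num.sqrt (1 + \sum_(j < n) A j ^+ 2).
Proof.
rewrite ltNge; apply/negP => le_sqrt_rho.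
set C := \sum_(j < n) A j ^+ 2 in le_sqrt_rho *.
set G := \sum_(j < n) (rho ^+ 2) ^+ j.
have C_ge0 : 0 <= C by apply: sumr_ge0 => j _; exact: sqr_ge0.
have G_ge0 : 0 <= G by apply: sumr_ge0 => j _; rewrite exprn_ge0 ?sqr_ge0.
have C_le : C <= rho ^+ 2 - 1.
  rewrite lerBrDl -(sqr_sqrtr (_ : 0 <= 1 + C)) ?addr_ge0 //.
  by rewrite lerXn2r ?nnegrE ?sqrtr_ge0.
have geom : (rho ^+ n) ^+ 2 - 1 = (rho ^+ 2 - 1) * G by rewrite exprAC subrX1.
have pow_le : (rho ^+ n) ^+ 2 <= C * G.
  have -> : G = \sum_(j < n) (rho ^+ j) ^+ 2 by apply: eq_bigr => j _; rewrite exprAC.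
  apply: le_trans (cauchy_schwarz A (fun j => rho ^+ j)).
  by rewrite lerXn2r ?nnegrE ?exprn_ge0 // (le_trans _ rho_pow_le) ?exprn_ge0.
have := ler_wpM2r G_ge0 C_le; lra.
Qed.

Lemma rho_lt_1_add_bigmax : rho < 1 + \big[Num.max/0]_(j < n) A j.
Proof.
rewrite ltNge; apply/negP => le_max_rho.
have A_le j : A j <= rho - 1.
  by apply: le_trans (le_bigmax 0 A j) _; rewrite lerBrDr addrC.
have : \sum_(j < n) A j * rho ^+ j <= (rho - 1) * \sum_(j < n) rho ^+ j.
  by rewrite mulr_sumr; apply: ler_sum => j _; rewrite ler_wpM2r ?exprn_ge0.
rewrite -subrX1 => /(le_trans rho_pow_le); lra.
Qed.

Lemma rho_le_max_1_sum : rho <= Num.max 1 (\sum_(j < n) A j).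
Proof.
case: n A A_ge0 rho_pow_le => [|m] B B_ge0 pow_le.
  by move: pow_le; rewrite big_ord0 expr0 ler10.
rewrite leNgt gt_max; apply/negP => /andP[rho_gt1 sum_lt].
have : \sum_(j < m.+1) B j * rho ^+ j <= (\sum_(j < m.+1) B j) * rho ^+ m.
  rewrite mulr_suml; apply: ler_sum => j _; rewrite ler_wpM2l //.
  by rewrite ler_weXn2l ?(ltW rho_gt1) // -ltnS.
have : (\sum_(j < m.+1) B j) * rho ^+ m < rho ^+ m.+1.
  by rewrite exprS ltr_pM2r // exprn_gt0 // (lt_trans ltr01 rho_gt1).
lra.
Qed.

End RootModulusBounds.

Section SliceEvaluation.
Variables (R : realType) (k : nat) (I : cd R k).
Hypothesis I_unit : imag_unit I.
Local Notation c0 := (czero R k).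

Lemma cpow_embI w j : cpow (embI I w) j = embI I (w ^+ j).
Proof. by elim: j => [|j IH] /=; rewrite ?embI1 // IH -embIM // exprS. Qed.

Lemma csum_embI (T : Type) (s : seq T) (F : T -> R[i]) :
  csum [seq embI I (F i) | i <- s] = embI I (\sum_(i <- s) F i).
Proof. by elim: s => [|x s IH] /=; rewrite ?big_nil ?embI0 // big_cons embID IH. Qed.

Lemma ceval_polyI (p : seq (cd R k)) w :
  ceval (polyI I p) (embI I w) =
  embI I (\sum_(j <- iota 0 (size p)) coordI I (nth c0 p j) * w ^+ j).
Proof.
rewrite /ceval size_map -csum_embI; congr csum.
apply/eq_in_map => j; rewrite mem_iota add0n => /andP[_ jp].
by rewrite (nth_map c0) // piIE cpow_embI // embIM.
Qed.

Lemma csum_enum_embI m (F : 'I_m -> R[i]) :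
  csum [seq embI I (F i) | i <- enum 'I_m] = embI I (\sum_(i < m) F i).
Proof. by rewrite csum_embI big_enum. Qed.

Lemma cabs_convex_comb_le m (z : 'I_m -> cd R k) (t : 'I_m -> R) :
  (forall i, inCI I (z i)) -> (forall i, 0 <= t i) -> \sum_(i < m) t i = 1 ->
  exists i, cabs (csum [seq cscale (t j) (z j) | j <- enum 'I_m]) <= cabs (z i).
Proof.
move=> zCI t_ge0 t_sum1.
pose w j := coordI I (z j).
have zE j : z j = embI I (w j) by exact: inCI_embI.
have [i le_i] := convex_comb_le_max (fun j => Normc.normc (w j)) t_ge0 t_sum1.
exists i; rewrite zE cabs_embI //.
have le_sum : cabs (csum [seq cscale (t j) (z j) | j <- enum 'I_m]) <=
              \sum_(j < m) t j * Normc.normc (w j).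
  rewrite (eq_map (fun j => congr1 (cscale (t j)) (zE j))).
  under eq_map do rewrite -embIZ.
  rewrite csum_enum_embI cabs_embI //; apply: le_trans (normc_sum _ _) _.
  by apply: (@ler_sum R) => j _; rewrite Normc.normcM normc_real.
exact: le_trans le_sum le_i.
Qed.

End SliceEvaluation.

Section MonicPolynomial.
Variables (R : realType) (k n : nat) (I : cd R k) (a : 'I_n -> cd R k).
Hypothesis I_unit : imag_unit I.
Local Notation c0 := (czero R k).
Local Notation p := (rcons [seq a j | j <- enum 'I_n] (cone R k)).

Lemma size_monic : size p = n.+1.
Proof. by rewrite size_rcons size_map size_enum_ord. Qed.

Lemma ceval_polyI_monic w :
  ceval (polyI I p) (embI I w) = embI I (w ^+ n + \sum_(j < n) coordI I (a j) * w ^+ j).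
Proof.
rewrite ceval_polyI // size_monic.
rewrite -[iota 0 n.+1]/(index_iota 0 n.+1) big_mkord big_ord_recr /= addrC.
rewrite nth_rcons size_map size_enum_ord ltnn eqxx coordI1 // mul1r.
congr (embI I (_ + _)); apply: eq_bigr => j _.
by rewrite nth_rcons size_map size_enum_ord ltn_ord (nth_map j) ?size_enum_ord // nth_ord_enum.
Qed.

Lemma nonconst_polyI_monic : (0 < n)%N -> nonconst (polyI I p).
Proof.
move=> n_gt0; exists n => //.
rewrite (nth_map c0) ?size_monic //.
rewrite nth_rcons size_map size_enum_ord ltnn eqxx piIE coordI1 // embI1.
by move/(congr1 (@cre R k)); rewrite cre_real cre0 => /eqP; rewrite oner_eq0.
Qed.

Lemma cabs_root_monic z :
  inCI I z -> ceval (polyI I p) z = c0 ->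
  cabs z ^+ n <= \sum_(j < n) cabs (a j) * cabs z ^+ j.
Proof.
move=> /(inCI_embI I_unit) ->.
rewrite ceval_polyI_monic // cabs_embI // => /(embI_eq0 I_unit) /normc_root_monic.
move/le_trans; apply; apply: ler_sum => j _.
by rewrite ler_wpM2r ?exprn_ge0 ?normc_ge0 ?normc_coordI_le.
Qed.

End MonicPolynomial.

Theorem lemma4p9 (R : realType) (k n : nat) (hn : (1 <= n)%N)
    (a : 'I_n -> cd R k) (r : cd R k) :
  snail (rcons [seq a j | j <- enum 'I_n] (cone R k)) r ->
  [/\ cabs r < Num.sqrt (1 + \sum_(j < n) cabs (a j) ^+ 2),
      cabs r < 1 + \big[Num.max/0]_(j < n) cabs (a j) &
      cabs r <= Num.max 1 (\sum_(j < n) cabs (a j))].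
Proof.
move=> [I [I_unit [hull _]]].
have [m [z [t [roots t_ge0 t_sum1 ->]]]] := hull (nonconst_polyI_monic a I_unit hn).
have [i le_zi] := cabs_convex_comb_le I_unit (fun j => (roots j).1) t_ge0 t_sum1.
have [zi_CI zi_root] := roots i.
have pow_le := cabs_root_monic I_unit zi_CI zi_root.
have cabs_ge0 j : 0 <= cabs (a j) by exact: sqrtr_ge0.
have zi_ge0 : 0 <= cabs (z i) by exact: sqrtr_ge0.
split; [apply: le_lt_trans le_zi _ | apply: le_lt_trans le_zi _ | apply: le_trans le_zi _].
- exact: rho_lt_sqrt_1_add_sumsq pow_le.
- exact: rho_lt_1_add_bigmax pow_le.
- exact: rho_le_max_1_sum pow_le.
Qed.
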